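(* Let $n,p_1,p_2\ge 1$, $p=p_1+p_2$, let $(A_k)_{k\ge 0}$ be a sequence of real $n\times n$ matrices, $C_1\in\mathbb{R}^{p_1\times n}$, $C_2\in\mathbb{R}^{p_2\times n}$, $C=\begin{pmatrix}C_1\\ C_2\end{pmatrix}$, $Q=Q^T>0$ ($n\times n$), and $R=R^T=\begin{pmatrix}R_{11}&R_{12}\\ R_{21}&R_{22}\end{pmatrix}>0$ ($p\times p$, with $R_{11}$ of size $p_1\times p_1$, $R_{22}$ of size $p_2\times p_2$). Fix $\lambda_1,\lambda_2\in[0,1]$. For $X=X^T\ge 0$ define $$g_{\lambda_1\lambda_2}(k,X)=A_kXA_k^T+Q-\lambda_1\lambda_2A_kXC^T(CXC^T+R)^{-1}CXA_k^T-\lambda_1(1-\lambda_2)A_kXC_1^T(C_1XC_1^T+R_{11})^{-1}C_1XA_k^T-(1-\lambda_1)\lambda_2A_kXC_2^T(C_2XC_2^T+R_{22})^{-1}C_2XA_k^T,$$ and for matrices $K\in\mathbb{R}^{n\times p}$, $K_1\in\mathbb{R}^{n\times p_1}$, $K_2\in\mathbb{R}^{n\times p_2}$ define $$\phi(k,K,K_1,K_2,X)=(1-\lambda_1)(1-\lambda_2)(A_kXA_k^T+Q)+\lambda_1\lambda_2\big((A_k+KC)X(A_k+KC)^T+Q+KRK^T\big)$$ $$+\lambda_1(1-\lambda_2)\big((A_k+K_1C_1)X(A_k+K_1C_1)^T+Q+K_1R_{11}K_1^T\big)+(1-\lambda_1)\lambda_2\big((A_k+K_2C_2)X(A_k+K_2C_2)^T+Q+K_2R_{22}K_2^T\big).$$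 Assume there exist matrices $K_k\in\mathbb{R}^{n\times p}$, $K_{k,1}\in\mathbb{R}^{n\times p_1}$, $K_{k,2}\in\mathbb{R}^{n\times p_2}$ ($k\ge0$) and a symmetric matrix $P>0$ such that $P>\phi(k,K_k,K_{k,1},K_{k,2},P)$ for all $k\ge 0$. Then for any symmetric initial condition $P_0\ge 0$, the sequence $P_{k+1}=g_{\lambda_1\lambda_2}(k,P_k)$ is bounded as $k\to\infty$.
   Context: All matrix inequalities are in the Loewner order: $M>N$ means $M-N$ is positive definite, $M\ge N$ means $M-N$ is positive semidefinite. The recursion is the covariance recursion of a two-channel extended Kalman filter with measurement arrival probabilities $\lambda_1,\lambda_2$ and linearized transition matrices $A_k$. *)

From HB Require Import structures.
From mathcomp Require Import all_boot all_order all_algebra.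
From mathcomp Require Import reals.
Set Implicit Arguments. Unset Strict Implicit. Unset Printing Implicit Defensive.
Import Order.TTheory GRing.Theory Num.Theory.
Local Open Scope ring_scope.

Definition posdef (R : realType) (n : nat) (M : 'M[R]_n) : Prop :=
  M^T = M /\ forall x : 'cV[R]_n, x != 0 -> 0 < (x^T *m M *m x) 0 0.

Definition psd (R : realType) (n : nat) (M : 'M[R]_n) : Prop :=
  M^T = M /\ forall x : 'cV[R]_n, 0 <= (x^T *m M *m x) 0 0.

Definition gmap (R : realType) (n p1 p2 : nat) (A : nat -> 'M[R]_n)
  (C1 : 'M[R]_(p1, n)) (C2 : 'M[R]_(p2, n)) (Q : 'M[R]_n)
  (Rm : 'M[R]_(p1 + p2)) (lam1 lam2 : R) (k : nat) (X : 'M[R]_n) : 'M[R]_n :=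
  let C := col_mx C1 C2 in
  let R11 := ulsubmx Rm in
  let R22 := drsubmx Rm in
  A k *m X *m (A k)^T + Q
  - (lam1 * lam2) *: (A k *m X *m C^T *m invmx (C *m X *m C^T + Rm) *m C *m X *m (A k)^T)
  - (lam1 * (1 - lam2)) *: (A k *m X *m C1^T *m invmx (C1 *m X *m C1^T + R11) *m C1 *m X *m (A k)^T)
  - ((1 - lam1) * lam2) *: (A k *m X *m C2^T *m invmx (C2 *m X *m C2^T + R22) *m C2 *m X *m (A k)^T).

Definition phimap (R : realType) (n p1 p2 : nat) (A : nat -> 'M[R]_n)
  (C1 : 'M[R]_(p1, n)) (C2 : 'M[R]_(p2, n)) (Q : 'M[R]_n)
  (Rm : 'M[R]_(p1 + p2)) (lam1 lam2 : R) (k : nat)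
  (K : 'M[R]_(n, p1 + p2)) (K1 : 'M[R]_(n, p1)) (K2 : 'M[R]_(n, p2))
  (X : 'M[R]_n) : 'M[R]_n :=
  let C := col_mx C1 C2 in
  let R11 := ulsubmx Rm in
  let R22 := drsubmx Rm in
  ((1 - lam1) * (1 - lam2)) *: (A k *m X *m (A k)^T + Q)
  + (lam1 * lam2) *: ((A k + K *m C) *m X *m (A k + K *m C)^T + Q + K *m Rm *m K^T)
  + (lam1 * (1 - lam2)) *: ((A k + K1 *m C1) *m X *m (A k + K1 *m C1)^T + Q + K1 *m R11 *m K1^T)
  + ((1 - lam1) * lam2) *: ((A k + K2 *m C2) *m X *m (A k + K2 *m C2)^T + Q + K2 *m R22 *m K2^T).

From HB Require Import structures.
From mathcomp Require Import all_boot all_order all_algebra.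
From mathcomp Require Import reals ring lra.
From mathcomp Require Import classical_sets boolp functions topology normedtype derive.
Set Implicit Arguments. Unset Strict Implicit. Unset Printing Implicit Defensive.
Import Order.TTheory GRing.Theory Num.Theory.
Import numFieldNormedType.Exports.
Local Open Scope classical_set_scope.
Local Open Scope ring_scope.

(* Completing the
   square in each gain shows that 0 <= g(k,X) <= phi(k,K,K1,K2,X) for every X >= 0
   and every choice of gains.  phi(k,...,X) is affine in X, with a monotone linear
   part and a nonnegative constant part, so X <= bP with b >= 1 gives
   phi(X) <= b phi(P) <= bP.  Since P > 0 dominates P0 up to a constant (a positive
   definite form is bounded below on the compact unit sphere), induction yields
   0 <= P_k <= bP for all k, and the entries of such a matrix are bounded by
   b tr P. *)

Section QuadraticForm.
Variable R : comPzRingType.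

Definition qform n (M : 'M[R]_n) (x : 'cV[R]_n) : R := (x^T *m M *m x) 0 0.

Lemma qformD n (M N : 'M[R]_n) x : qform (M + N) x = qform M x + qform N x.
Proof. by rewrite /qform mulmxDr mulmxDl mxE. Qed.

Lemma qformN n (M : 'M[R]_n) x : qform (- M) x = - qform M x.
Proof. by rewrite /qform mulmxN mulNmx mxE. Qed.

Lemma qformB n (M N : 'M[R]_n) x : qform (M - N) x = qform M x - qform N x.
Proof. by rewrite qformD qformN. Qed.

Lemma qformZ n a (M : 'M[R]_n) x : qform (a *: M) x = a * qform M x.
Proof. by rewrite /qform -scalemxAr -scalemxAl mxE. Qed.

Lemma qform0 n (M : 'M[R]_n) : qform M 0 = 0.
Proof. by rewrite /qform mulmx0 mxE. Qed.

Lemma qformZv n (M : 'M[R]_n) a x : qform M (a *: x) = a ^+ 2 * qform M x.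
Proof.
by rewrite /qform [(a *: x)^T]linearZ /= -!scalemxAl -scalemxAr !mxE mulrA -expr2.
Qed.

Lemma qform_congr m n (B : 'M[R]_(n, m)) (M : 'M[R]_m) x :
  qform (B *m M *m B^T) x = qform M (B^T *m x).
Proof. by rewrite /qform trmx_mul trmxK !mulmxA. Qed.

Lemma qformE n (M : 'M[R]_n) x :
  qform M x = \sum_j \sum_i x i 0 * M i j * x j 0.
Proof.
rewrite /qform mxE; apply: eq_bigr => j _; rewrite mxE big_distrl /=.
by apply: eq_bigr => i _; rewrite mxE.
Qed.

Lemma qformDv n (M : 'M[R]_n) x y :
  qform M (x + y) = qform M x + qform M y + (x^T *m M *m y + y^T *m M *m x) 0 0.
Proof. by rewrite /qform [(x + y)^T]linearD /= !mulmxDr !mulmxDl !mxE; ring. Qed.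

Lemma qformBv n (M : 'M[R]_n) x y :
  qform M (x - y) = qform M x + qform M y - (x^T *m M *m y + y^T *m M *m x) 0 0.
Proof. by rewrite /qform [(x - y)^T]linearB /= !mulmxBr !mulmxBl !mxE; ring. Qed.

Lemma bilin_delta n (M : 'M[R]_n) i j :
  ((delta_mx i 0 : 'cV_n)^T *m M *m (delta_mx j 0 : 'cV_n)) 0 0 = M i j.
Proof. by rewrite trmx_delta -rowE -colE !mxE. Qed.

Lemma qform_delta n (M : 'M[R]_n) i : qform M (delta_mx i 0) = M i i.
Proof. exact: bilin_delta. Qed.

End QuadraticForm.

Section Loewner.
Variable R : realType.

Lemma posdef_psd n (M : 'M[R]_n) : posdef M -> psd M.
Proof.
move=> [sM pM]; split=> // x.
by have [->|/pM/ltW //] := eqVneq x 0; rewrite -/(qform M 0) qform0.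
Qed.

Lemma posdef_unitmx n (M : 'M[R]_n) : posdef M -> M \in unitmx.
Proof.
move=> [_ pM]; rewrite unitmxE unitfE; apply/negP => /det0P[v v0 vM].
have := pM v^T; rewrite trmx_eq0 trmxK vM mul0mx mxE ltxx.
by move=> /(_ v0).
Qed.

Lemma psdZ n a (M : 'M[R]_n) : 0 <= a -> psd M -> psd (a *: M).
Proof.
move=> a0 [sM pM]; split=> [|x]; first by rewrite linearZ /= sM.
by rewrite -/(qform _ x) qformZ mulr_ge0 // pM.
Qed.

Lemma psd_congr m n (B : 'M[R]_(n, m)) (X : 'M[R]_m) : psd X -> psd (B *m X *m B^T).
Proof.
move=> [sX pX]; split=> [|x]; last by rewrite -/(qform _ x) qform_congr pX.
by rewrite !trmx_mul trmxK sX mulmxA.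
Qed.

Lemma posdef_psd_congrD m n (C : 'M[R]_(m, n)) (X : 'M[R]_n) (S : 'M[R]_m) :
  psd X -> posdef S -> posdef (C *m X *m C^T + S).
Proof.
move=> hX [sS pS]; have [sCX pCX] := psd_congr C hX.
split=> [|x x0]; first by rewrite linearD /= sCX sS.
by rewrite -/(qform _ x) qformD ltr_wpDl ?pCX ?pS.
Qed.

Lemma posdef_ulsubmx p1 p2 (M : 'M[R]_(p1 + p2)) : posdef M -> posdef (ulsubmx M).
Proof.
move=> [sM pM]; split=> [|x x0]; first by rewrite trmx_ulsub sM.
have := pM (col_mx x 0); rewrite -{1}(submxK M) tr_col_mx mul_row_block trmx0.
rewrite !mul0mx !addr0 mul_row_col mulmx0 addr0; apply.
by rewrite -col_mx0; apply: contra x0 => /eqP/eq_col_mx[-> _].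
Qed.

Lemma posdef_drsubmx p1 p2 (M : 'M[R]_(p1 + p2)) : posdef M -> posdef (drsubmx M).
Proof.
move=> [sM pM]; split=> [|x x0]; first by rewrite trmx_drsub sM.
have := pM (col_mx 0 x); rewrite -{1}(submxK M) tr_col_mx mul_row_block trmx0.
rewrite !mul0mx !add0r mul_row_col mulmx0 add0r; apply.
by rewrite -col_mx0; apply: contra x0 => /eqP/eq_col_mx[_ ->].
Qed.

Lemma psd_entry_le n (M : 'M[R]_n) i j : psd M -> `|M i j| <= (M i i + M j j) / 2.
Proof.
move=> [sM pM]; have Mji : M j i = M i j by rewrite -[in LHS]sM mxE.
have hD : 0 <= qform M (delta_mx i 0 + delta_mx j 0) := pM _.
have hB : 0 <= qform M (delta_mx i 0 - delta_mx j 0) := pM _.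
rewrite qformDv mxE !bilin_delta !qform_delta Mji in hD.
rewrite qformBv mxE !bilin_delta !qform_delta Mji in hB.
by rewrite ler_norml; apply/andP; split; lra.
Qed.

Lemma psd_diag_le_trace n (M : 'M[R]_n) i : psd M -> M i i <= \tr M.
Proof.
move=> [_ pM]; rewrite /mxtrace (bigD1 i) //= lerDl.
by apply: sumr_ge0 => l _; rewrite -qform_delta pM.
Qed.

Lemma entry_le_trace n (M N : 'M[R]_n) i j :
  psd M -> psd N -> (forall x, qform M x <= qform N x) -> `|M i j| <= \tr N.
Proof.
move=> hM hN MN; apply: le_trans (psd_entry_le i j hM) _.
have := MN (delta_mx i 0); have := MN (delta_mx j 0); rewrite !qform_delta.
have := psd_diag_le_trace i hN; have := psd_diag_le_trace j hN.
lra.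
Qed.

End Loewner.

Section Domination.
Variable R : realType.

Lemma continuous_sum (T : topologicalType) (I : finType) (F : I -> T -> R) :
  (forall i, continuous (F i)) -> continuous (fun y => \sum_i F i y).
Proof.
move=> Fc y; rewrite -(fct_sumE (index_enum I) xpredT F).
elim/big_ind: _ => //; first exact: cst_continuous.
by move=> f g fc gc; apply: continuousD.
Qed.

Lemma continuous_qform_row n (M : 'M[R]_n) :
  continuous (fun y : 'rV[R]_n => qform M y^T).
Proof.
have qE y : qform M y^T = \sum_j \sum_i y 0 i * M i j * y 0 j.
  by rewrite qformE; apply: eq_bigr => j _; apply: eq_bigr => i _; rewrite !mxE.
rewrite (funext qE); apply: continuous_sum => j; apply: continuous_sum => i y.
apply: (@continuousM _ _ (fun y : 'rV[R]_n => y 0 i * M i j) (fun y => y 0 j));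
  last exact: coord_continuous.
apply: (@continuousM _ _ (fun y : 'rV[R]_n => y 0 i) (fun=> M i j));
  [exact: coord_continuous | exact: cst_continuous].
Qed.

Lemma mx_entry_le_norm m n (M : 'M[R]_(m, n)) i j : `|M i j| <= `|M|.
Proof.
by rewrite [leRHS]/Num.norm /= mx_normrE; apply/bigmax_geP; right; exists (i, j).
Qed.

Lemma norm_normalize n (y : 'rV[R]_n) : y != 0 -> `| `|y|^-1 *: y | = 1.
Proof. by move=> y0; rewrite normrZ normfV normr_id mulVf // normr_eq0. Qed.

Lemma compact_unit_sphere n : compact [set y : 'rV[R]_n | `|y| = 1].
Proof.
apply: bounded_closed_compact.
  by exists 1; split => // b b1 y /= ->; apply: ltW.
rewrite (_ : [set y | _] = Num.norm @^-1` [set 1]) //.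
apply: preimage_closed; last exact: closed_eq.
by move=> y _; apply: norm_continuous.
Qed.

Lemma qform_le_sqr_norm n (M : 'M[R]_n) x :
  qform M x <= (\sum_j \sum_i `|M i j|) * `|x^T| ^+ 2.
Proof.
rewrite qformE big_distrl /=; apply: ler_sum => j _.
rewrite big_distrl /=; apply: ler_sum => i _.
apply: le_trans (ler_norm _) _; rewrite !normrM.
have xi : `|x i 0| <= `|x^T| by have := mx_entry_le_norm x^T 0 i; rewrite mxE.
have xj : `|x j 0| <= `|x^T| by have := mx_entry_le_norm x^T 0 j; rewrite mxE.
rewrite [_ * `|M i j|]mulrC -mulrA expr2 ler_wpM2l //.
exact: ler_pM.
Qed.

Lemma posdef_qform_ge_sqr_norm n (P : 'M[R]_n) :
  posdef P -> exists2 m, 0 < m & forall x, m * `|x^T| ^+ 2 <= qform P x.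
Proof.
case: n P => [|n] P [_ pP].
  by exists 1 => // x; rewrite [x]flatmx0 trmx0 normr0 expr0n mulr0 qform0.
have S0 : [set y : 'rV[R]_n.+1 | `|y| = 1] !=set0.
  pose e : 'rV[R]_n.+1 := delta_mx 0 0.
  have e0 : e != 0 by apply/eqP => /matrixP/(_ 0 0)/eqP; rewrite !mxE eqxx oner_eq0.
  by exists (`|e|^-1 *: e); apply: norm_normalize.
have [y0 /set_mem y01 y0_min] := compact_EVT_min S0 (@compact_unit_sphere n.+1)
  (continuous_subspaceT (@continuous_qform_row n.+1 P)).
have y0_neq0 : y0^T != 0.
  by rewrite trmx_eq0 -normr_eq0 y01 oner_eq0.
exists (qform P y0^T); first exact: pP.
move=> x; have [->|x0] := eqVneq x 0.
  by rewrite trmx0 normr0 expr0n mulr0 qform0.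
have xT0 : x^T != 0 by rewrite trmx_eq0.
have r0 : 0 < `|x^T| by rewrite normr_gt0.
have := y0_min _ (mem_set (norm_normalize xT0)).
rewrite linearZ /= trmxK qformZv.
by rewrite exprVn ler_pdivlMl ?exprn_gt0 // mulrC.
Qed.

Lemma posdef_dominates n (P M : 'M[R]_n) :
  posdef P -> exists c, forall x, qform M x <= c * qform P x.
Proof.
move=> /posdef_qform_ge_sqr_norm[m m0 mP]; set s := \sum_j \sum_i `|M i j|.
have s0 : 0 <= s by apply: sumr_ge0 => j _; apply: sumr_ge0.
exists (s / m) => x; apply: le_trans (qform_le_sqr_norm M x) _.
by rewrite -mulrA ler_wpM2l // ler_pdivlMl.
Qed.

End Domination.

Definition kalman_reduction (R : comUnitRingType) n p (A X : 'M[R]_n)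
    (C : 'M[R]_(p, n)) (V : 'M[R]_p) : 'M[R]_n :=
  A *m X *m C^T *m invmx (C *m X *m C^T + V) *m C *m X *m A^T.

Section KalmanGain.
Variables (R : realType) (n p : nat) (A X : 'M[R]_n) (C : 'M[R]_(p, n)) (V : 'M[R]_p).
Hypotheses (hX : psd X) (hV : posdef V).

Let S := C *m X *m C^T + V.
Let hS : posdef S := posdef_psd_congrD C hX hV.

Lemma kalman_reduction_sym : (kalman_reduction A X C V)^T = kalman_reduction A X C V.
Proof.
have [[sS _] [sX _]] := (hS, hX).
by rewrite /kalman_reduction !trmx_mul !trmxK trmx_inv sS sX !mulmxA.
Qed.

Lemma qform_gain_square (K : 'M[R]_(n, p)) x :
  qform ((A + K *m C) *m X *m (A + K *m C)^T + K *m V *m K^T) x =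
  qform (A *m X *m A^T - kalman_reduction A X C V) x
  + qform S ((K + A *m X *m C^T *m invmx S)^T *m x).
Proof.
have [[sS _] [sX _]] := (hS, hX); have uS := posdef_unitmx hS.
set G := A *m X *m C^T *m invmx S.
have GT : G^T = invmx S *m C *m X *m A^T.
  by rewrite /G !trmx_mul trmxK sX trmx_inv sS !mulmxA.
have KSG : K *m S *m G^T = K *m C *m X *m A^T.
  by rewrite GT !mulmxA -(mulmxA K S) mulmxV // mulmx1.
have GSK : G *m S *m K^T = A *m X *m C^T *m K^T.
  by rewrite /G -(mulmxA _ (invmx S)) mulVmx // mulmx1.
have GSG : G *m S *m G^T = kalman_reduction A X C V.
  by rewrite GT /G -(mulmxA _ (invmx S)) mulVmx // mulmx1 !mulmxA.
have KSK : qform (K *m S *m K^T) x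
    = qform (K *m C *m X *m C^T *m K^T) x + qform (K *m V *m K^T) x.
  by rewrite /S mulmxDr mulmxDl qformD !mulmxA.
rewrite -qform_congr [(K + G)^T]linearD /= [(K + G) *m S]mulmxDl.
clearbody G; clear GT; clearbody hS S.
rewrite !mulmxDr !mulmxDl !qformD KSG GSK GSG KSK.
rewrite linearD /= trmx_mul !mulmxDr !qformD qformN !mulmxA.
lra.
Qed.

Lemma qform_kalman_reduction_le x :
  qform (kalman_reduction A X C V) x <= qform (A *m X *m A^T) x.
Proof.
rewrite -subr_ge0 -qformB.
(* The optimal gain [- A X C^T S^-1] makes the square vanish. *)
have := qform_gain_square (- (A *m X *m C^T *m invmx S)) x.
rewrite addNr trmx0 mul0mx qform0 addr0 => <-.
rewrite qformD addr_ge0 //; first exact: (psd_congr _ hX).2.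
exact: (psd_congr _ (posdef_psd hV)).2.
Qed.

Lemma qform_kalman_reduction_gain (K : 'M[R]_(n, p)) x :
  qform (A *m X *m A^T - kalman_reduction A X C V) x
  <= qform ((A + K *m C) *m X *m (A + K *m C)^T + K *m V *m K^T) x.
Proof. by rewrite qform_gain_square lerDl; apply: (posdef_psd hS).2. Qed.

End KalmanGain.

Section RiccatiRecursion.
Variables (R : realType) (n p1 p2 : nat) (A : nat -> 'M[R]_n).
Variables (C1 : 'M[R]_(p1, n)) (C2 : 'M[R]_(p2, n)) (Q : 'M[R]_n) (V : 'M[R]_(p1 + p2)).
Variables (lam1 lam2 : R).
Hypotheses (hQ : posdef Q) (hV : posdef V).
Hypotheses (hlam1 : 0 <= lam1 <= 1) (hlam2 : 0 <= lam2 <= 1).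

Local Notation g := (gmap A C1 C2 Q V lam1 lam2).
Local Notation phi := (phimap A C1 C2 Q V lam1 lam2).

Let hV1 : posdef (ulsubmx V) := posdef_ulsubmx hV.
Let hV2 : posdef (drsubmx V) := posdef_drsubmx hV.

Let weights_ge0 : [/\ 0 <= lam1 * lam2, 0 <= lam1 * (1 - lam2),
  0 <= (1 - lam1) * lam2 & 0 <= (1 - lam1) * (1 - lam2)].
Proof.
by move: hlam1 hlam2 => /andP[? ?] /andP[? ?]; split; apply: mulr_ge0; rewrite ?subr_ge0.
Qed.

Lemma gmapE k X : g k X = A k *m X *m (A k)^T + Q
  - (lam1 * lam2) *: kalman_reduction (A k) X (col_mx C1 C2) V
  - (lam1 * (1 - lam2)) *: kalman_reduction (A k) X C1 (ulsubmx V)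
  - ((1 - lam1) * lam2) *: kalman_reduction (A k) X C2 (drsubmx V).
Proof. by []. Qed.

Lemma gmap_psd k X : psd X -> psd (g k X).
Proof.
move=> hX; have [sAXA pAXA] := psd_congr (A k) hX; have [sQ pQ] := posdef_psd hQ.
split=> [|x].
  rewrite gmapE !linearB !linearZ /= linearD /= sAXA sQ.
  by rewrite (kalman_reduction_sym _ _ hX hV) (kalman_reduction_sym _ _ hX hV1)
    (kalman_reduction_sym _ _ hX hV2).
have [w0 w1 w2 w3] := weights_ge0.
have r0 := ler_wpM2l w0 (qform_kalman_reduction_le (A k) (col_mx C1 C2) hX hV x).
have r1 := ler_wpM2l w1 (qform_kalman_reduction_le (A k) C1 hX hV1 x).
have r2 := ler_wpM2l w2 (qform_kalman_reduction_le (A k) C2 hX hV2 x).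
have r3 := mulr_ge0 w3 (pAXA x : 0 <= qform _ x).
have := pQ x : 0 <= qform _ x; rewrite -/(qform _ x) gmapE !qformB !qformD !qformZ.
lra.
Qed.

Lemma qform_gmap_le_phimap k K K1 K2 X x :
  psd X -> qform (g k X) x <= qform (phi k K K1 K2 X) x.
Proof.
move=> hX; have [w0 w1 w2 w3] := weights_ge0.
have r0 := ler_wpM2l w0 (qform_kalman_reduction_gain (A k) (col_mx C1 C2) hX hV K x).
have r1 := ler_wpM2l w1 (qform_kalman_reduction_gain (A k) C1 hX hV1 K1 x).
have r2 := ler_wpM2l w2 (qform_kalman_reduction_gain (A k) C2 hX hV2 K2 x).
rewrite !qformB !qformD in r0 r1 r2.
rewrite gmapE /phimap /= !qformB !qformD !qformZ !qformD.
lra.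
Qed.

Lemma qform_phimap_le_scale k K K1 K2 X Y b x :
  1 <= b -> (forall y, qform X y <= b * qform Y y) ->
  qform (phi k K K1 K2 X) x <= b * qform (phi k K K1 K2 Y) x.
Proof.
move=> b1 XY; have [w0 w1 w2 w3] := weights_ge0.
have [_ pQ] := posdef_psd hQ; have [_ pV] := psd_congr K (posdef_psd hV).
have [_ pV1] := psd_congr K1 (posdef_psd hV1).
have [_ pV2] := psd_congr K2 (posdef_psd hV2).
have r0 := ler_wpM2l w0 (XY ((A k + K *m col_mx C1 C2)^T *m x)).
have r1 := ler_wpM2l w1 (XY ((A k + K1 *m C1)^T *m x)).
have r2 := ler_wpM2l w2 (XY ((A k + K2 *m C2)^T *m x)).
have r3 := ler_wpM2l w3 (XY ((A k)^T *m x)).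
have c0 : 0 <= (b - 1) * (qform Q x + lam1 * lam2 * qform (K *m V *m K^T) x
   + lam1 * (1 - lam2) * qform (K1 *m ulsubmx V *m K1^T) x
   + (1 - lam1) * lam2 * qform (K2 *m drsubmx V *m K2^T) x).
  rewrite mulr_ge0 ?subr_ge0 // !addr_ge0 ?(mulr_ge0 w0) ?(mulr_ge0 w1)
    ?(mulr_ge0 w2) //; by [apply: pQ | apply: pV | apply: pV1 | apply: pV2].
rewrite -!qform_congr in r0 r1 r2 r3.
rewrite /phimap /= !qformD !qformZ !qformD.
lra.
Qed.

Lemma gmap_iterates_dominated (K : nat -> 'M[R]_(n, p1 + p2))
    (K1 : nat -> 'M[R]_(n, p1)) (K2 : nat -> 'M[R]_(n, p2)) (P : 'M[R]_n)
    (Pk : nat -> 'M[R]_n) :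
  posdef P -> (forall k, posdef (P - phi k (K k) (K1 k) (K2 k) P)) ->
  psd (Pk 0%N) -> (forall k, Pk k.+1 = g k (Pk k)) ->
  exists2 b, 0 <= b & forall k, psd (Pk k) /\ forall x, qform (Pk k) x <= b * qform P x.
Proof.
move=> hP hPphi hP0 PkS; have [c hc] := posdef_dominates (Pk 0%N) hP.
have [_ pP] := posdef_psd hP.
have b1 : 1 <= Num.max c 1 by rewrite le_max lexx orbT.
exists (Num.max c 1) => [|k]; first exact: le_trans ler01 b1.
elim: k => [|k [hk hkb]].
  split=> // x; apply: le_trans (hc x) _.
  by apply: ler_wpM2r; [apply: pP | rewrite le_max lexx].
rewrite PkS; split=> [|x]; first exact: gmap_psd.
apply: le_trans (qform_gmap_le_phimap _ (K k) (K1 k) (K2 k) x hk) _.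
apply: le_trans (qform_phimap_le_scale k (K k) (K1 k) (K2 k) x b1 hkb) _.
rewrite ler_wpM2l ?(le_trans ler01 b1) // -subr_ge0 -qformB.
exact: (posdef_psd (hPphi k)).2.
Qed.

End RiccatiRecursion.

Theorem theorem1 (R : realType) (n p1 p2 : nat)
  (hn : (0 < n)%N) (hp1 : (0 < p1)%N) (hp2 : (0 < p2)%N)
  (A : nat -> 'M[R]_n) (C1 : 'M[R]_(p1, n)) (C2 : 'M[R]_(p2, n))
  (Q : 'M[R]_n) (Rm : 'M[R]_(p1 + p2)) (lam1 lam2 : R) :
  posdef Q -> posdef Rm ->
  0 <= lam1 <= 1 -> 0 <= lam2 <= 1 ->
  (exists (K : nat -> 'M[R]_(n, p1 + p2)) (K1 : nat -> 'M[R]_(n, p1))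
          (K2 : nat -> 'M[R]_(n, p2)) (P : 'M[R]_n),
      posdef P /\
      forall k : nat,
        posdef (P - phimap A C1 C2 Q Rm lam1 lam2 k (K k) (K1 k) (K2 k) P)) ->
  forall (P0 : 'M[R]_n), psd P0 ->
  forall Pk : nat -> 'M[R]_n,
    Pk 0%N = P0 ->
    (forall k : nat, Pk k.+1 = gmap A C1 C2 Q Rm lam1 lam2 k (Pk k)) ->
    exists c : R, forall (k : nat) (i j : 'I_n), `|Pk k i j| <= c.
Proof.
move=> hQ hRm hlam1 hlam2 [K [K1 [K2 [P [hP hPphi]]]]] P0 hP0 Pk Pk0 PkS.
rewrite -Pk0 in hP0.
have [b b0 hb] := gmap_iterates_dominated hQ hRm hlam1 hlam2 hP hPphi hP0 PkS.
exists (\tr (b *: P)) => k i j; have [hk hkb] := hb k.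
apply: entry_le_trace hk (psdZ b0 (posdef_psd hP)) _ => x.
by rewrite qformZ.
Qed.
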